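(* Let $R$ be a semifield, $\phi:\underline n\to\underline m$ a surjective map of sets, $(X_j)_{j\in\underline m}$ and $(Y_i)_{i\in\underline n}$ families of $R$-convex sets, and for each $j\in\underline m$ let $f_j:\prod_{i\in\phi^{-1}(j)}Y_i\to X_j$ be a $|\phi^{-1}(j)|$-convex map. Then there is a unique convex map $F:\bigotimes_{i\in\underline n}Y_i\to\bigotimes_{j\in\underline m}X_j$ such that $F\circ U_{(Y_i)}=U_{(X_j)}\circ\prod_jf_j$, where $\prod_jf_j:\prod_{i\in\underline n}Y_i\to\prod_{j\in\underline m}X_j$ sends $(y_i)_i$ to $(f_j((y_i)_{i\in\phi^{-1}(j)}))_j$.
   Context: A semifield is a commutative semiring in which every nonzero element is invertible. $D_R$ is the monad on $\mathsf{Set}$ of finitely supported $R$-valued distributions summing to $1$; $R$-convex sets are $D_R$-algebras, convex maps are algebra maps. $\underline n=\{1,\dots,n\}$. A map $\prod_{i\in S}A_i\to Z$ from a product of convex sets is $|S|$-convex if it is convex in each variable separately. $\bigotimes_{i\in\underline n}Y_i$ is the quotient of $D_R(\prod_iY_i)$ by the smallest convex equivalence relation containing $1\bullet(\sum_{k_i}\alpha^i_{k_i}y^i_{k_i})_{i}\sim\sum_{(k_1,\dots,k_n)}\alpha^1_{k_1}\cdots\alpha^n_{k_n}\bullet(y^1_{k_1},\dots,y^n_{k_n})$; $U_{(Y_i)}:\prod_iY_i\to\bigotimes_iY_i$ sends $(y_1,\dots,y_n)$ to $y_1\otimes\cdots\otimes y_n$, the class of $1\bullet(y_1,\dots,y_n)$.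 This map is $n$-convex and every $n$-convex map out of $\prod_iY_i$ factors uniquely through it by a convex map. *)

From HB Require Import structures.
From mathcomp Require Import all_boot all_order all_algebra.
From mathcomp Require Import boolp classical_sets functions cardinality fsbigop.
Set Implicit Arguments. Unset Strict Implicit. Unset Printing Implicit Defensive.
Import Order.TTheory GRing.Theory.
Local Open Scope classical_set_scope.
Local Open Scope ring_scope.

Section Dist.
Variable R : comNzSemiRingType.

Definition fsum (X : Type) (d : X -> R) : R :=
  \sum_(x \in [set: {classic X}]) d x.

Definition dsupp (X : Type) (d : X -> R) : set X := [set x | d x != 0].

Definition is_dist (X : Type) (d : X -> R) : Prop :=
  finite_set (dsupp d) /\ fsum d = 1.

Definition dist (X : Type) : Type := {d : X -> R | is_dist d}.

Lemma sum_restrict (X : Type) (A S : set {classic X}) (g : X -> R) :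
  (forall x, ~ S x -> g x = 0) ->
  \sum_(x \in A) g x = \sum_(x \in A `&` S) g x.
Proof.
move=> gS; apply/esym/fsbig_widen => // x [Ax] /not_andP [//|/gS h]; exact: h.
Qed.

Lemma fsum_supp (X : Type) (g : X -> R) (S : set {classic X}) :
  dsupp g `<=` S -> fsum g = \sum_(x \in S) g x.
Proof.
move=> sS; rewrite /fsum (sum_restrict _ (S := S)) ?setTI //.
by move=> x Sx; apply/eqP; apply: contra_notT Sx => /sS.
Qed.

Definition delta_raw (X : Type) (x : X) : X -> R :=
  fun y => if `[< y = x >] then 1 else 0.

Lemma delta_is_dist (X : Type) (x : X) : is_dist (delta_raw x).
Proof.
have sx : dsupp (delta_raw x) `<=` [set x].
  by move=> y; rewrite /dsupp /delta_raw /=; case: asboolP => // _; rewrite eqxx.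
split; first exact: sub_finite_set sx (finite_set1 x).
rewrite (fsum_supp (S := [set x : {classic X}])) // fsbig_set1 /delta_raw.
by case: asboolP.
Qed.

Definition ddelta (X : Type) (x : X) : dist X := exist _ _ (delta_is_dist x).

Definition dmap_raw (X Y : Type) (f : X -> Y) (d : dist X) : Y -> R :=
  fun y => \sum_(x \in [set x : {classic X} | f x = y]) sval d x.

Lemma dmap_is_dist (X Y : Type) (f : X -> Y) (d : dist X) :
  is_dist (dmap_raw f d).
Proof.
case: d => d [dfin d1] /=.
have sS : dsupp (dmap_raw f (exist _ d (conj dfin d1))) `<=` f @` dsupp d.
  move=> y; rewrite /dsupp /dmap_raw /=; apply: contraNP => ny.
  apply/eqP; apply: fsbig1 => x /= fxy; apply/eqP; apply: contra_notT ny => dx.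
  by exists x.
split; first exact: sub_finite_set sS (finite_image _ dfin).
rewrite (fsum_supp (S := (f @` dsupp d : set {classic Y}))) //.
have inner : forall y : Y, dmap_raw f (exist _ d (conj dfin d1)) y =
   \sum_(x \in (dsupp d : set {classic X})) (if `[< f x = y >] then d x else 0).
  move=> y; rewrite /dmap_raw /= (sum_restrict _ (S := dsupp d)); last first.
    by move=> x; rewrite /dsupp /= => /negP; rewrite negbK => /eqP.
  rewrite [RHS](sum_restrict _ (S := [set x | f x = y])); last first.
    by move=> x fxy; case: asboolP.
  rewrite setIC; apply: eq_fsbigr => x; rewrite inE => -[_ /= ->].
  by case: asboolP.
under eq_fsbigr => y _ do rewrite inner.
rewrite exchange_fsbig //; last first.
  exact: finite_image.
rewrite -d1 (fsum_supp (S := (dsupp d : set {classic X}))) //.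
apply: eq_fsbigr => x; rewrite inE => dx.
have fx : (f @` dsupp d : set {classic Y}) (f x) by exists x.
have fin : finite_set (f @` dsupp d : set {classic Y}) by exact: finite_image.
rewrite (fsbigD1 (f x : {classic Y})) //.
rewrite fsbig1; first by rewrite Monoid.simpm; case: asboolP.
by move=> y [_ /= yfx]; case: asboolP => // fxy; exfalso; apply: yfx; rewrite fxy.
Qed.

Definition dmap (X Y : Type) (f : X -> Y) (d : dist X) : dist Y :=
  exist _ _ (dmap_is_dist f d).

Definition dmu_raw (X : Type) (P : dist (dist X)) : X -> R :=
  fun x => \sum_(e \in [set: {classic (dist X)}]) sval P e * sval e x.

Lemma dmu_is_dist (X : Type) (P : dist (dist X)) : is_dist (dmu_raw P).
Proof.
case: P => P [Pfin P1].
set U : set {classic X} := \bigcup_(e in (dsupp P : set {classic (dist X)})) dsupp (sval e).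
have Ufin : finite_set U.
  apply: bigcup_finite => // e _; by case: e => e [].
have sU : dsupp (dmu_raw (exist _ P (conj Pfin P1))) `<=` U.
  move=> x; rewrite /dsupp /dmu_raw /=; apply: contraNP => nx.
  apply/eqP; apply: fsbig1 => e _; apply/eqP.
  have [P0|Pe] := eqVneq (P e) 0; first by rewrite P0 mul0r.
  have [e0|ex] := eqVneq (sval e x) 0; first by rewrite e0 mulr0.
  by exfalso; apply: nx; exists e.
split; first exact: sub_finite_set sU Ufin.
rewrite (fsum_supp (S := U)) // /dmu_raw /=.
have inner : forall x : X, \sum_(e \in [set: {classic (dist X)}]) P e * sval e x =
   \sum_(e \in (dsupp P : set {classic (dist X)})) P e * sval e x.
  move=> x; rewrite (sum_restrict _ (S := dsupp P)) ?setTI //.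
  by move=> e; rewrite /dsupp /= => /negP; rewrite negbK => /eqP ->; rewrite mul0r.
under eq_fsbigr => x _ do rewrite inner.
rewrite exchange_fsbig //.
rewrite -P1 (fsum_supp (S := (dsupp P : set {classic (dist X)}))) //.
apply: eq_fsbigr => e; rewrite inE => Pe.
rewrite -fsbig_distrr //.
have [_ e1] := svalP e.
rewrite -[RHS]mulr1; congr (_ * _); rewrite -e1 (fsum_supp (S := U)) //.
by move=> x ex; exists e.
Qed.

Definition dmu (X : Type) (P : dist (dist X)) : dist X :=
  exist _ _ (dmu_is_dist P).

End Dist.

Arguments ddelta {R X} x.
Arguments dmap {R X Y} f d.
Arguments dmu {R X} P.

(** R-convex sets = D_R-algebras *)
Section Convex.
Variable R : comNzSemiRingType.

Definition alg_laws (A : Type) (a : dist R A -> A) : Prop :=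
  (forall x : A, a (ddelta x) = x) /\
  (forall P : dist R (dist R A), a (dmu P) = a (dmap a P)).

Record convType := ConvType {
  conv_car :> Type;
  conv_alg : dist R conv_car -> conv_car;
  conv_lawsP : alg_laws conv_alg }.

Definition conv_hom (A B : Type) (a : dist R A -> A) (b : dist R B -> B)
  (f : A -> B) : Prop := forall d : dist R A, f (a d) = b (dmap f d).

Definition convex (A B : convType) (f : A -> B) : Prop :=
  conv_hom (@conv_alg A) (@conv_alg B) f.

Definition multiconvex (I : eqType) (A : I -> convType) (Z : convType)
  (g : (forall i, A i) -> Z) : Prop :=
  forall (y : forall i, A i) (i : I), convex (fun a : A i => g (dfwith y a)).

Definition conv_equiv (A : Type) (a : dist R A -> A) (E : A -> A -> Prop) : Prop :=
  [/\ (forall x, E x x), (forall x y, E x y -> E y x),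
      (forall x y z, E x y -> E y z -> E x z) &
      (forall d : dist R (A * A), (forall p, sval d p != 0 -> E p.1 p.2) ->
         E (a (dmap fst d)) (a (dmap snd d)))].

Section Tensor.
Variables (n : nat) (Y : 'I_n -> convType).

Definition prodY : Type := forall i : 'I_n, Y i.

Definition tgen (u v : dist R prodY) : Prop :=
  exists d : forall i : 'I_n, dist R (Y i),
    u = ddelta (fun i => conv_alg (d i)) /\
    forall y : prodY, sval v y = \prod_(i < n) sval (d i) (y i).

Definition trel (u v : dist R prodY) : Prop :=
  forall E : dist R prodY -> dist R prodY -> Prop,
    conv_equiv (@dmu R prodY) E -> (forall a b, tgen a b -> E a b) -> E u v.

Definition tensor : Type := {C : dist R prodY -> Prop | exists u, C = trel u}.

Definition tproj (u : dist R prodY) : tensor :=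
  exist _ (trel u) (ex_intro _ u erefl).

Definition trep (t : tensor) : dist R prodY := sval (cid (svalP t)).

Definition tensor_alg (D : dist R tensor) : tensor :=
  tproj (dmu (dmap trep D)).

Definition tensorU (y : prodY) : tensor := tproj (ddelta y).

End Tensor.
End Convex.

Arguments tensor_alg {R n Y} D.
Arguments tensorU {R n Y} y.
Arguments multiconvex {R I} A {Z} g.
Arguments convex {R A B} f.
Arguments conv_hom {R A B} a b f.

From HB Require Import structures.
From mathcomp Require Import all_boot all_order all_algebra.
From mathcomp Require Import boolp classical_sets functions cardinality fsbigop.
Import GRing.Theory.
Local Open Scope ring_scope.

(** The tensor product of the [Y i] is universal for n-convex maps: for such a
    map [g] into a convex set [Z], the function sending a formal combination [u]
    of tuples to the barycenter of [dmap g u] is constant on the classes of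
    [trel]. Indeed its kernel is a convex equivalence relation, and it
    identifies each generating pair, as one sees by expanding the convex
    combinations one coordinate at a time, using convexity of [g] in that
    coordinate. The map [y |-> U_X (f_j (y restricted to phi^-1 j))_j] is
    n-convex, since changing [y i] only changes the coordinate [phi i], where
    [f (phi i)] is convex in [y i] and [U_X] is convex in every coordinate; the
    required [F] is the map it induces on the tensor product. *)

Section DistributionMonad.
Local Open Scope classical_set_scope.
Context {R : comNzSemiRingType}.

Definition iverson (P : Prop) : R := if `[< P >] then 1 else 0.

Lemma iversonT {P : Prop} : P -> iverson P = 1.
Proof. by rewrite /iverson; case: asboolP. Qed.

Lemma iversonF {P : Prop} : ~ P -> iverson P = 0.
Proof. by rewrite /iverson; case: asboolP. Qed.

Lemma iverson_neq0 {P : Prop} : iverson P != 0 -> P.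
Proof. by rewrite /iverson; case: asboolP => // _; rewrite eqxx. Qed.

Lemma neq0_factors (a b : R) : a * b != 0 -> a != 0 /\ b != 0.
Proof.
have [->|a0] := eqVneq a 0; first by rewrite mul0r eqxx.
by have [->|b0] := eqVneq b 0; first by rewrite mulr0 eqxx.
Qed.

Lemma dsuppMl {X} (g h : X -> R) : dsupp (fun x => g x * h x) `<=` dsupp g.
Proof. by move=> x /neq0_factors []. Qed.

Lemma dist_ext {X} (d e : dist R X) : (forall x, sval d x = sval e x) -> d = e.
Proof. by case: d e => [d hd] [e he] /= /funext de; exact: eq_exist. Qed.

Lemma dist_finite_supp {X} (d : dist R X) : finite_set (dsupp (sval d)).
Proof. by case: d => ? []. Qed.

Lemma eq_fsum {X} {g h : X -> R} : (forall x, g x = h x) -> fsum g = fsum h.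
Proof. by move=> /funext ->. Qed.

Lemma fsum1 {X} (g : X -> R) : (forall x, g x = 0) -> fsum g = 0.
Proof. by move=> g0; apply: fsbig1 => x _; exact: g0. Qed.

Lemma fsum_single {X} (g : X -> R) x0 :
  (forall x, x <> x0 -> g x = 0) -> fsum g = g x0.
Proof.
move=> g0; rewrite (fsum_supp (S := [set x0 : {classic X}])) ?fsbig_set1 //.
move=> x /eqP gx; apply: contrapT => /g0; exact: gx.
Qed.

Lemma mulr_fsumr {X} {g : X -> R} c {S : set {classic X}} :
  finite_set S -> dsupp g `<=` S -> c * fsum g = fsum (fun x => c * g x).
Proof.
move=> Sf gS; rewrite (fsum_supp gS) (fsum_supp (g := fun x => c * g x) (S := S)).
  by rewrite fsbig_distrr.
by move=> x /neq0_factors [_ /gS].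
Qed.

Lemma mulr_fsuml {X} {g : X -> R} c {S : set {classic X}} :
  finite_set S -> dsupp g `<=` S -> fsum g * c = fsum (fun x => g x * c).
Proof.
by move=> Sf gS; rewrite mulrC (mulr_fsumr c Sf gS); apply: eq_fsum => x; rewrite mulrC.
Qed.

Lemma exchange_fsum {X Y} {g : X -> Y -> R} {A : set {classic X}} {B : set {classic Y}} :
  finite_set A -> finite_set B -> (forall a b, g a b != 0 -> A a /\ B b) ->
  fsum (fun a => fsum (fun b => g a b)) = fsum (fun b => fsum (fun a => g a b)).
Proof.
move=> Af Bf gAB.
have gA a : fsum (fun b => g a b) = \sum_(b \in B) g a b.
  by apply: fsum_supp => b /gAB [].
have gB b : fsum (fun a => g a b) = \sum_(a \in A) g a b.
  by apply: fsum_supp => a /gAB [].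
rewrite (eq_fsum gA) (eq_fsum gB) (fsum_supp (S := A)); last first.
  move=> a /eqP ga; apply: contrapT => Aa; apply: ga.
  by apply: fsbig1 => b _; apply/eqP; apply: contraT => /gAB [].
rewrite [RHS](fsum_supp (S := B)); first exact: exchange_fsbig.
move=> b /eqP gb; apply: contrapT => Bb; apply: gb.
by apply: fsbig1 => a _; apply/eqP; apply: contraT => /gAB [].
Qed.

Lemma ddeltaE {X} (x y : X) : sval (ddelta x : dist R X) y = iverson (y = x).
Proof. by []. Qed.

Lemma dmapE {X Y} (f : X -> Y) (d : dist R X) y :
  sval (dmap f d) y = fsum (fun x => sval d x * iverson (y = f x)).
Proof.
rewrite /= /dmap_raw fsbig_mkcond /fsum; apply: eq_fsbigr => x _.
rewrite /patch; case: (asboolP (y = f x)) => [->|yfx].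
  by rewrite ifT ?iversonT ?mulr1 // inE.
rewrite ifF ?iversonF ?mulr0 //; apply/negbTE; rewrite notin_setE.
by move=> /esym.
Qed.

Lemma dmuE {X} (P : dist R (dist R X)) x :
  sval (dmu P) x = fsum (fun e => sval P e * sval e x).
Proof. by []. Qed.

Lemma fsum_dmap {X Y} (f : X -> Y) (d : dist R X) (k : Y -> R) :
  fsum (fun y => sval (dmap f d) y * k y) = fsum (fun x => sval d x * k (f x)).
Proof.
have dS := dist_finite_supp d.
under eq_fsum => y do rewrite dmapE (mulr_fsuml _ dS (dsuppMl _ _)).
rewrite (exchange_fsum (finite_image f dS) dS); last first.
  by move=> y x /neq0_factors [/neq0_factors [dx /iverson_neq0 yfx] _]; split => //; exists x.
apply: eq_fsum => x; rewrite (fsum_single _ (f x)) ?iversonT ?mulr1 //.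
by move=> y yfx; rewrite (iversonF yfx) mulr0 mul0r.
Qed.

Lemma dmu_dmapE {X Y} (h : X -> dist R Y) (d : dist R X) z :
  sval (dmu (dmap h d)) z = fsum (fun a => sval d a * sval (h a) z).
Proof. by rewrite dmuE (fsum_dmap h d (fun e => sval e z)). Qed.

Lemma dmap_supp {X Y} {f : X -> Y} {d : dist R X} {y} :
  sval (dmap f d) y != 0 -> exists2 x, sval d x != 0 & f x = y.
Proof.
rewrite dmapE => /eqP dy; apply: contrapT => nx; apply: dy; apply: fsum1 => x.
have [->|dx] := eqVneq (sval d x) 0; first by rewrite mul0r.
by rewrite iversonF ?mulr0 // => yfx; apply: nx; exists x.
Qed.

Lemma dmap_ddelta {X Y} (f : X -> Y) (x : X) :
  dmap f (ddelta x : dist R X) = ddelta (f x).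
Proof.
apply: dist_ext => z; rewrite dmapE (fsum_single _ x); last first.
  by move=> y yx; rewrite ddeltaE (iversonF yx) mul0r.
by rewrite !ddeltaE (iversonT (erefl x)) mul1r.
Qed.

Lemma dmap_id {X} (d : dist R X) : dmap id d = d.
Proof.
apply: dist_ext => x; rewrite dmapE (fsum_single _ x) ?iversonT ?mulr1 //.
by move=> y yx; rewrite (iversonF (not_eq_sym yx)) mulr0.
Qed.

Lemma eq_in_dmap {X Y} {f g : X -> Y} {d : dist R X} :
  (forall x, sval d x != 0 -> f x = g x) -> dmap f d = dmap g d.
Proof.
move=> fg; apply: dist_ext => y; rewrite !dmapE; apply: eq_fsum => x.
by have [->|/fg ->] := eqVneq (sval d x) 0; rewrite ?mul0r.
Qed.

Lemma dmap_comp {X Y Z} (f : X -> Y) (g : Y -> Z) (d : dist R X) :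
  dmap g (dmap f d) = dmap (g \o f) d.
Proof. by apply: dist_ext => z; rewrite !dmapE (fsum_dmap f d (fun y => iverson (z = g y))). Qed.

Lemma dmu_ddelta {X} (d : dist R X) : dmu (ddelta d) = d.
Proof.
apply: dist_ext => z; rewrite dmuE (fsum_single _ d) ?ddeltaE ?iversonT ?mul1r //.
by move=> e ed; rewrite ddeltaE (iversonF ed) mul0r.
Qed.

Lemma dmu_dmap_ddelta {X} (d : dist R X) : dmu (dmap ddelta d) = d.
Proof.
apply: dist_ext => z; rewrite dmu_dmapE (fsum_single _ z) ?ddeltaE ?iversonT ?mulr1 //.
by move=> x xz; rewrite ddeltaE (iversonF (not_eq_sym xz)) mulr0.
Qed.

Definition dsupp_bind {X} (P : dist R (dist R X)) : set {classic X} :=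
  \bigcup_(e in (dsupp (sval P) : set {classic (dist R X)})) dsupp (sval e).

Lemma dsupp_bind_finite {X} (P : dist R (dist R X)) : finite_set (dsupp_bind P).
Proof. by apply: bigcup_finite => [|e _]; exact: dist_finite_supp. Qed.

Lemma dmap_dmu {X Y} (f : X -> Y) (P : dist R (dist R X)) :
  dmap f (dmu P) = dmu (dmap (dmap f) P).
Proof.
apply: dist_ext => z; rewrite dmu_dmapE dmapE.
have lhs x : sval (dmu P) x * iverson (z = f x) =
    fsum (fun e => sval P e * sval e x * iverson (z = f x)).
  by rewrite dmuE (mulr_fsuml _ (dist_finite_supp P) (dsuppMl _ _)).
have rhs e : sval P e * sval (dmap f e) z =
    fsum (fun x => sval P e * (sval e x * iverson (z = f x))).
  by rewrite dmapE (mulr_fsumr _ (dist_finite_supp e) (dsuppMl _ _)).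
rewrite (eq_fsum lhs) (eq_fsum rhs).
rewrite (exchange_fsum (dsupp_bind_finite P) (dist_finite_supp P)).
  by apply: eq_fsum => e; apply: eq_fsum => x; rewrite mulrA.
by move=> x e /neq0_factors [/neq0_factors [Pe ex] _]; split => //; exists e.
Qed.

Lemma dmuA {X} (Q : dist R (dist R (dist R X))) : dmu (dmu Q) = dmu (dmap dmu Q).
Proof.
apply: dist_ext => z; rewrite dmu_dmapE dmuE.
have lhs e : sval (dmu Q) e * sval e z = fsum (fun E => sval Q E * sval E e * sval e z).
  by rewrite dmuE (mulr_fsuml _ (dist_finite_supp Q) (dsuppMl _ _)).
have rhs E : sval Q E * sval (dmu E) z = fsum (fun e => sval Q E * (sval E e * sval e z)).
  by rewrite dmuE (mulr_fsumr _ (dist_finite_supp E) (dsuppMl _ _)).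
rewrite (eq_fsum lhs) (eq_fsum rhs).
rewrite (exchange_fsum (dsupp_bind_finite Q) (dist_finite_supp Q)).
  by apply: eq_fsum => E; apply: eq_fsum => e; rewrite mulrA.
by move=> e E /neq0_factors [/neq0_factors [QE Ee] _]; split => //; exists E.
Qed.

Lemma prod_iverson (I : finType) (P : pred I) (Q : I -> Prop) :
  \prod_(i | P i) iverson (Q i) = iverson (forall i, P i -> Q i).
Proof.
case: (asboolP (forall i, P i -> Q i)) => [PQ|nPQ].
  by rewrite iversonT // big1 // => i /PQ /iversonT.
have [i Pi nQi] : exists2 i, P i & ~ Q i.
  by apply: contrapT => nex; apply: nPQ => i Pi; apply: contrapT => nQi; apply: nex; exists i.
by rewrite iversonF // (bigD1 i) //= iversonF // mul0r.
Qed.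

Lemma dmap_dfwithE (I : eqType) (T : I -> Type) (x : forall i, T i) (j : I)
    (e : dist R (T j)) (z : forall i, T i) :
  sval (dmap (@dfwith _ _ x j) e) z = sval e (z j) * iverson (forall i, i != j -> z i = x i).
Proof.
rewrite dmapE (fsum_single _ (z j)); last first.
  move=> a zja; suff nz : z <> dfwith x a by rewrite (iversonF nz) mulr0.
  by move=> zxa; rewrite zxa dfwith_in in zja.
congr (_ * _); congr iverson; apply: propext; split=> [zx i ij|zx].
  by rewrite zx dfwith_out // eq_sym.
apply: functional_extensionality_dep => i.
case: (eqVneq j i) => [<-|ji]; first by rewrite dfwith_in.
by rewrite dfwith_out // zx // eq_sym.
Qed.

End DistributionMonad.

Lemma convex_comp {R : comNzSemiRingType} (A B C : convType R) (f : A -> B) (g : B -> C) :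
  convex f -> convex g -> convex (g \o f).
Proof. by move=> fC gC d; rewrite /= fC gC dmap_comp. Qed.

Section TensorQuotient.
Context {R : comNzSemiRingType} {n : nat} {Y : 'I_n -> convType R}.
Local Notation PY := (prodY Y).

Lemma trel_equiv : conv_equiv (@dmu R PY) (@trel R n Y).
Proof.
split=> [x E [Erefl _ _ _] _|x y xy E EE Egen|x y z xy yz E EE Egen|d dE E EE Egen].
- exact: Erefl.
- by case: (EE) => _ Esym _ _; apply: Esym; exact: xy.
- by case: (EE) => _ _ Etrans _; apply: (Etrans _ y); [exact: xy|exact: yz].
- by case: (EE) => _ _ _ Econv; apply: Econv => p dp; exact: dE p dp E EE Egen.
Qed.

Lemma trel_refl (u : dist R PY) : trel u u.
Proof. by case: trel_equiv. Qed.

Lemma trel_sym (u v : dist R PY) : trel u v -> trel v u.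
Proof. by case: trel_equiv => _ + _ _; apply. Qed.

Lemma trel_trans (v u w : dist R PY) : trel u v -> trel v w -> trel u w.
Proof. by case: trel_equiv => _ _ + _; apply. Qed.

Lemma trel_dmu_dmap {A} (d : dist R A) (h1 h2 : A -> dist R PY) :
  (forall a, sval d a != 0 -> trel (h1 a) (h2 a)) ->
  trel (dmu (dmap h1 d)) (dmu (dmap h2 d)).
Proof.
move=> h12; have [_ _ _ /(_ (dmap (fun a => (h1 a, h2 a)) d)) Econv] := trel_equiv.
rewrite !dmap_comp in Econv; apply: Econv => _ /dmap_supp [a da <-]; exact: h12.
Qed.

Lemma tproj_eq (u v : dist R PY) : trel u v -> tproj u = tproj v.
Proof.
move=> uv; apply: eq_exist; apply: funext => w; apply: propext.
by split; [apply: trel_trans; exact: trel_sym|exact: trel_trans].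
Qed.

Lemma trepK : cancel (@trep R n Y) (@tproj R n Y).
Proof.
case=> C CP; apply: eq_exist; rewrite /trep /=.
(* [svalP] is opaque: generalize the proof of membership it produces. *)
by move: (svalP _) => CP'; rewrite -(svalP (cid CP')).
Qed.

Lemma trel_trep (u : dist R PY) : trel (trep (tproj u)) u.
Proof. by have := congr1 sval (trepK (tproj u)) => /= ->; exact: trel_refl. Qed.

Lemma tproj_dmap {A} (k : A -> PY) (e : dist R A) :
  tproj (dmap k e) = tensor_alg (dmap (tensorU \o k) e).
Proof.
rewrite /tensor_alg dmap_comp; apply: tproj_eq.
rewrite -[X in trel X]dmu_dmap_ddelta dmap_comp.
by apply: trel_dmu_dmap => a _; apply: trel_sym; exact: trel_trep.
Qed.

Lemma tproj_tensorU (u : dist R PY) : tproj u = tensor_alg (dmap tensorU u).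
Proof. by rewrite -[in LHS](dmap_id u) tproj_dmap. Qed.

Lemma tensor_alg_laws : alg_laws (@tensor_alg R n Y).
Proof.
split=> [t|P]; first by rewrite /tensor_alg dmap_ddelta dmu_ddelta trepK.
rewrite /tensor_alg; apply: tproj_eq.
rewrite dmap_comp dmap_dmu dmuA dmap_comp.
by apply: trel_dmu_dmap => x _; apply: trel_sym; exact: trel_trep.
Qed.

Definition tensor_convType : convType R := ConvType (@tensor_alg_laws).

Lemma tensorU_multiconvex : multiconvex Y (tensorU : PY -> tensor_convType).
Proof.
move=> x j e; rewrite /= -tproj_dmap; apply: tproj_eq => E _; apply.
exists (dfwith (fun i => ddelta (x i)) e); split=> [|z].
  congr ddelta; apply: functional_extensionality_dep => i.
  case: (eqVneq j i) => [<-|ji]; first by rewrite !dfwith_in.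
  by rewrite !dfwith_out // (conv_lawsP (Y i)).1.
rewrite dmap_dfwithE (bigD1 j) //= dfwith_in -prod_iverson; congr (_ * _).
by apply: eq_bigr => i ij; rewrite dfwith_out 1?eq_sym.
Qed.

End TensorQuotient.

Arguments tensor_convType {R n} Y.

Section ProductDistribution.
Context {R : comNzSemiRingType} {I : eqType} {T : I -> Type}.
Variable d : forall i, dist R (T i).

Fixpoint dprod_on (s : seq I) (y : forall i, T i) : dist R (forall i, T i) :=
  if s is k :: s' then dmu (dmap (fun a => dprod_on s' (dfwith y a)) (d k))
  else ddelta y.

Lemma dprod_onE (s : seq I) (y z : forall i, T i) : uniq s ->
  sval (dprod_on s y) z =
  \prod_(i <- s) sval (d i) (z i) * iverson (forall i, i \notin s -> z i = y i).
Proof.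
elim: s y => [y _|k s IHs y /andP [ks us]].
  rewrite ddeltaE big_nil mul1r; congr iverson; apply: propext.
  by split=> [-> //|zy]; apply: functional_extensionality_dep => i; exact: zy.
rewrite dmu_dmapE (fsum_single _ (z k)); last first.
  move=> a zka; rewrite IHs // iversonF ?mulr0 // => zy; apply: zka.
  by rewrite zy // dfwith_in.
rewrite IHs // big_cons mulrA; congr (_ * iverson _); apply: propext.
split=> zy i; first by rewrite inE negb_or => /andP [ik iS]; rewrite zy // dfwith_out // eq_sym.
move=> iS; case: (eqVneq k i) => [<-|ki]; first by rewrite dfwith_in.
by rewrite dfwith_out // zy // inE negb_or eq_sym ki.
Qed.

End ProductDistribution.

Section MulticonvexProduct.
Context {R : comNzSemiRingType} {I : finType} {A : I -> convType R} {Z : convType R}.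
Variables (g : (forall i, A i) -> Z) (d : forall i, dist R (A i)).
Hypothesis g_multi : multiconvex A g.

Lemma multiconvex_dprod_on (s : seq I) (y : forall i, A i) : uniq s ->
  g (fun i => if i \in s then conv_alg (d i) else y i) = conv_alg (dmap g (dprod_on d s y)).
Proof.
elim: s y => [y _|k s IHs y /andP [ks us]] /=.
  by rewrite dmap_ddelta (conv_lawsP Z).1.
have -> : (fun i => if i \in k :: s then conv_alg (d i) else y i) =
    dfwith (fun i => if i \in s then conv_alg (d i) else y i) (conv_alg (d k)).
  apply: functional_extensionality_dep => i; case: (eqVneq k i) => [<-|ki].
    by rewrite dfwith_in inE eqxx.
  by rewrite dfwith_out // inE eq_sym (negbTE ki).
rewrite g_multi dmap_dmu (conv_lawsP Z).2 !dmap_comp; congr conv_alg; apply: eq_in_dmap => a _ /=.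
rewrite -IHs //; congr g; apply: functional_extensionality_dep => i.
case: (eqVneq k i) => [<-|ki]; first by rewrite (negbTE ks) !dfwith_in.
by rewrite !dfwith_out.
Qed.

Lemma multiconvex_dprod (v : dist R (forall i, A i)) :
  (forall z, sval v z = \prod_i sval (d i) (z i)) ->
  g (fun i => conv_alg (d i)) = conv_alg (dmap g v).
Proof.
move=> vE; have := @multiconvex_dprod_on (enum I) (fun i => conv_alg (d i)) (enum_uniq I).
have -> : (fun i => if i \in enum I then conv_alg (d i) else conv_alg (d i)) =
    (fun i => conv_alg (d i)).
  by apply: functional_extensionality_dep => i; rewrite if_same.
move=> ->; congr (conv_alg (dmap g _)); apply: dist_ext => z.
rewrite dprod_onE ?enum_uniq // iversonT ?mulr1 ?vE ?big_enum // => i.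
by rewrite mem_enum.
Qed.

End MulticonvexProduct.

Section UniversalProperty.
Context {R : comNzSemiRingType} {n : nat} {Y : 'I_n -> convType R} {Z : convType R}.
Variable g : prodY Y -> Z.
Hypothesis g_multi : multiconvex Y g.

Lemma conv_dmap_tgen (u v : dist R (prodY Y)) :
  tgen u v -> conv_alg (dmap g u) = conv_alg (dmap g v).
Proof. by case=> d [-> vE]; rewrite dmap_ddelta (conv_lawsP Z).1; exact: multiconvex_dprod. Qed.

Lemma conv_dmap_trel {u v : dist R (prodY Y)} :
  trel u v -> conv_alg (dmap g u) = conv_alg (dmap g v).
Proof.
move/(_ (fun u v => conv_alg (dmap g u) = conv_alg (dmap g v))); apply; last first.
  exact: conv_dmap_tgen.
split=> [x //|x y /= -> //|x y z /= -> //|D /= DE].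
rewrite !dmap_dmu !(conv_lawsP Z).2 !dmap_comp; congr conv_alg.
by apply: eq_in_dmap => p /DE.
Qed.

Definition tensor_lift (t : tensor Y) : Z := conv_alg (dmap g (trep t)).

Lemma tensor_lift_tensorU (y : prodY Y) : tensor_lift (tensorU y) = g y.
Proof. by rewrite /tensor_lift (conv_dmap_trel (trel_trep _)) dmap_ddelta (conv_lawsP Z).1. Qed.

Lemma tensor_lift_convex : conv_hom tensor_alg (@conv_alg R Z) tensor_lift.
Proof.
move=> D; rewrite /tensor_lift /tensor_alg (conv_dmap_trel (trel_trep _)).
by rewrite dmap_dmu (conv_lawsP Z).2 !dmap_comp.
Qed.

Lemma tensor_lift_unique (F : tensor Y -> Z) :
  conv_hom tensor_alg (@conv_alg R Z) F -> (forall y, F (tensorU y) = g y) -> F =1 tensor_lift.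
Proof.
move=> FC FU t; rewrite -[t in LHS]trepK tproj_tensorU FC dmap_comp.
by congr conv_alg; apply: eq_in_dmap => y _; exact: FU.
Qed.

Theorem tensor_universal : exists! F : tensor Y -> Z,
  conv_hom tensor_alg (@conv_alg R Z) F /\ forall y, F (tensorU y) = g y.
Proof.
exists tensor_lift; split=> [|F [FC FU]].
  by split; [exact: tensor_lift_convex|exact: tensor_lift_tensorU].
by apply/esym/funext; exact: tensor_lift_unique.
Qed.

End UniversalProperty.

Section FibreProduct.
Context {I J : eqType} {phi : I -> J} {T : I -> Type} {S : J -> Type}.
Variable f : forall j, (forall i : {i | phi i == j}, T (sval i)) -> S j.

Definition fibre_prod (y : forall i, T i) : forall j, S j :=
  fun j => f j (fun i => y (sval i)).

Definition in_fibre (i : I) : {i0 | phi i0 == phi i} := exist _ i (eqxx (phi i)).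

Definition fibre_update (y : forall i, T i) {i : I} (a : T i) : S (phi i) :=
  f (phi i) (@dfwith _ (fun i0 : {i0 | phi i0 == phi i} => T (sval i0))
       (fun i0 => y (sval i0)) (in_fibre i) a).

Lemma fibre_prod_dfwith (y : forall i, T i) (i : I) (a : T i) :
  fibre_prod (dfwith y a) = dfwith (fibre_prod y) (fibre_update y a).
Proof.
apply: functional_extensionality_dep => j; rewrite /fibre_prod.
case: (eqVneq (phi i) j) => [<-|ij]; last first.
  rewrite dfwith_out //; congr (f j); apply: functional_extensionality_dep => -[i0 /= /eqP i0j].
  by rewrite dfwith_out //; apply: contra_neq ij => ->.
rewrite dfwith_in /fibre_update; congr (f (phi i)); apply: functional_extensionality_dep => -[i0 p] /=.
case: (eqVneq i i0) => [ii0|ii0]; last by rewrite !dfwith_out.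
subst i0; rewrite (bool_irrelevance p (eqxx (phi i))) dfwith_in.
by rewrite -[exist _ i _]/(in_fibre i) dfwith_in.
Qed.

End FibreProduct.

Lemma tensorU_fibre_prod_multiconvex {R : comNzSemiRingType} {n m : nat}
    {phi : 'I_n -> 'I_m} {X : 'I_m -> convType R} {Y : 'I_n -> convType R}
    {f : forall j, (forall i : {i | phi i == j}, Y (sval i)) -> X j} :
  (forall j, multiconvex (fun i : {i | phi i == j} => Y (sval i)) (f j)) ->
  multiconvex Y (fun y => tensorU (fibre_prod f y) : tensor_convType X).
Proof.
move=> f_multi y i.
have -> : (fun a => tensorU (fibre_prod f (dfwith y a)) : tensor_convType X) =
    (fun b => tensorU (dfwith (fibre_prod f y) b) : tensor_convType X) \o fibre_update f y (i:=i).
  by apply: funext => a; rewrite /= fibre_prod_dfwith.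
apply: convex_comp; last exact: tensorU_multiconvex.
exact: (f_multi (phi i) (fun i0 => y (sval i0)) (in_fibre i)).
Qed.

Theorem mainTheorem16 (R : comNzSemiRingType)
  (R_semifield : forall x : R, x != 0 -> exists y : R, x * y = 1)
  (n m : nat) (phi : 'I_n -> 'I_m) (phi_surj : forall j : 'I_m, exists i, phi i = j)
  (X : 'I_m -> convType R) (Y : 'I_n -> convType R)
  (f : forall j : 'I_m, (forall i : {i : 'I_n | phi i == j}, Y (sval i)) -> X j)
  (f_multi : forall j : 'I_m,
     multiconvex (fun i : {i : 'I_n | phi i == j} => Y (sval i)) (f j)) :
  exists! F : tensor Y -> tensor X,
    conv_hom tensor_alg tensor_alg F /\
    forall y : prodY Y,
      F (tensorU y) = tensorU (fun j : 'I_m => f j (fun i => y (sval i))).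
Proof.
exact: tensor_universal _ (tensorU_fibre_prod_multiconvex f_multi).
Qed.
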